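(* Let $A=(S,f_c,f_d)$ be any self-similar cellular automaton with $\{0,1\}\subseteq S$, and let $k_0\ge 0$. Let $\mathcal{C}$ be the set of configurations $c:\mathbb{Z}\to\{0,1\}$ that are either the all-zero configuration $0^\infty$ or have exactly one cell equal to $1$, that cell having positive index. Then it is impossible that, for every $c\in\mathcal{C}$, the state of cycle $(0,k_0)$ is deterministic for initial configuration $c$ and its common value equals $1$ when $c\neq 0^\infty$ and equals $0$ when $c=0^\infty$.
   Context: A self-similar cellular automaton is a triple $A=(S,f_c,f_d)$ with $S$ a finite set of states and $f_c,f_d:S^3\to S$. Cells are indexed by $j\in\mathbb{Z}$; cell $j$ has cycles $[k/2^j,(k+1)/2^j)$, and the $k$-th cycle of cell $j$ is identified with the pair $(j,k)$. The automaton is started at time $0$; the set of cycles is $C=\{(i,k): i\in\mathbb{Z},\ k\in\mathbb{Z}_{\ge 0}\}$. Given an initial configuration $c:\mathbb{Z}\to S$, an evolution of $A$ from $c$ is a map $s:C\to S$ with $s(i,0)=c(i)$ for all $i$ and, for all $(i,k)$ with $k\ge1$, $s(i,k)=f_c\big(s(i-1,\lfloor (k-1)/2\rfloor),s(i,k-1),s(i+1,2k-1)\big)$ if $k$ is even and $s(i,k)=f_d(\text{same arguments})$ if $k$ is odd. The state of cycle $(i_0,k_0)$ is deterministic for initial configuration $c$ if $s(i_0,k_0)$ takes the same value for all evolutions $s$ of $A$ from $c$ (its common value). *)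

From Stdlib Require Import ZArith.
From mathcomp Require Import all_boot.

Set Implicit Arguments.
Unset Strict Implicit.
Unset Printing Implicit Defensive.

Record SSCA := mkSSCA {
  state : finType;
  f_c : state -> state -> state -> state;
  f_d : state -> state -> state -> state
}.

Definition is_evolution (A : SSCA) (c : Z -> state A) (s : Z -> nat -> state A) : Prop :=
  (forall i : Z, s i O = c i) /\
  (forall (i : Z) (k : nat), (leq 1 k) ->
     let args := (s (Z.sub i 1) (divn (subn k 1) 2), s i (subn k 1), s (Z.add i 1) (subn (muln 2 k) 1)) in
     s i k = (if ~~ odd k then @f_c A args.1.1 args.1.2 args.2
              else @f_d A args.1.1 args.1.2 args.2)).

Definition deterministic_with_value (A : SSCA) (c : Z -> state A)
    (i0 : Z) (k0 : nat) (v : state A) : Prop :=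
  (exists s, is_evolution c s /\ s i0 k0 = v) /\
  (forall s, is_evolution c s -> s i0 k0 = v).

(* Configurations over {0,1}, where zero and one are the (distinct) states 0 and 1 of S. *)
Definition all_zero_config (S : Type) (zero : S) : Z -> S := fun _ => zero.
Definition single_one_config (S : Type) (zero one : S) (p : Z) : Z -> S :=
  fun i => if Z.eqb i p then one else zero.

From Stdlib Require Import ZArith.
From Stdlib Require Import ClassicalEpsilon Classical Cantor Lia List.
From mathcomp Require Import all_boot.

Set Implicit Arguments.
Unset Strict Implicit.
Unset Printing Implicit Defensive.

(* Proof idea (a compactness argument).  For each
   p choose an evolution e_p from the configuration whose 1 sits at cell p+1
   with e_p(0,k0) = 1.  Since states range over a finite set and cycles are
   countable, the sequence (e_p) has a cluster point s: every finite set of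
   cycles is matched by e_p for arbitrarily large p (Koenig's lemma, proved
   by a diagonal refinement of infinite index sets).  The local update rule
   only involves finitely many cycles, and the configurations converge
   pointwise to the all-zero one, so s is an evolution from 0^oo; but
   s(0,k0) = 1, contradicting determinism with value 0. *)

Definition infinitely_often (P : nat -> Prop) : Prop :=
  forall m : nat, exists p, (m <= p)%N /\ P p.

Lemma infinitely_often_fiber (T : finType) (P : nat -> Prop) (f : nat -> T) :
  infinitely_often P -> exists v, infinitely_often (fun p => P p /\ f p = v).
Proof.
move=> HP; apply: NNPP => no_fiber.
have bounded : forall v : T, exists m, forall p, (m <= p)%N -> P p -> f p <> v.
  move=> v; apply: NNPP => Hv; apply: no_fiber; exists v => m.
  apply: NNPP => Hm; apply: Hv; exists m => p Hp HPp Hf; apply: Hm; exists p; auto.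
pose bound v := epsilon (inhabits 0%N)
                  (fun m => forall p, (m <= p)%N -> P p -> f p <> v).
have boundP v p : (bound v <= p)%N -> P p -> f p <> v.
  exact: (epsilon_spec (inhabits 0%N) _ (bounded v)).
have [p [Hp HPp]] := HP (\max_(v : T) bound v).
apply: (boundP (f p) p) => //; apply: leq_trans Hp; exact: leq_bigmax.
Qed.

Definition cycle_of_code (n : nat) : Z * nat :=
  let (x, k) := Cantor.of_nat n in let (a, b) := Cantor.of_nat x in
  (Z.of_nat a - Z.of_nat b, k)%Z.

Definition code_of_cycle (q : Z * nat) : nat :=
  Cantor.to_nat (Cantor.to_nat (Z.to_nat q.1, Z.to_nat (- q.1)), q.2).

Lemma code_of_cycleK (q : Z * nat) : cycle_of_code (code_of_cycle q) = q.
Proof.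
case: q => i k; rewrite /cycle_of_code /code_of_cycle !Cantor.cancel_of_to /=.
f_equal; lia.
Qed.

Definition cluster_point (T : Type) (e : nat -> Z -> nat -> T)
    (s : Z -> nat -> T) : Prop :=
  forall (F : list (Z * nat)) (m : nat),
    exists p, (m <= p)%N /\ forall q, In q F -> e p q.1 q.2 = s q.1 q.2.

Section ClusterPoint.
Variables (T : finType) (e : nat -> Z -> nat -> T).

Definition popular_value (n : nat) (P : nat -> Prop) : T :=
  epsilon (inhabits (e 0 0%Z 0))
    (fun v => infinitely_often
                (fun p => P p /\ e p (cycle_of_code n).1 (cycle_of_code n).2 = v)).

Fixpoint refine (n : nat) : nat -> Prop :=
  match n with
  | O => fun _ => True
  | S n => fun p => refine n p /\
      e p (cycle_of_code n).1 (cycle_of_code n).2 = popular_value n (refine n)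
  end.

Lemma refine_infinite (n : nat) : infinitely_often (refine n).
Proof.
elim: n => [|n IH] /=; first by move=> m; exists m.
apply: (epsilon_spec (inhabits _)
          (fun v => infinitely_often (fun p => refine n p /\ _ = v))).
exact: infinitely_often_fiber.
Qed.

Lemma refine_antitone (n N p : nat) : (n <= N)%N -> refine N p -> refine n p.
Proof.
elim: N => [|N IH]; first by rewrite leqn0 => /eqP ->.
rewrite leq_eqVlt => /orP [/eqP -> //|Hn] /= [H _]; exact: IH.
Qed.

Definition diagonal_limit (i : Z) (k : nat) : T :=
  popular_value (code_of_cycle (i, k)) (refine (code_of_cycle (i, k))).

Lemma refine_agrees (N p : nat) (i : Z) (k : nat) :
  refine N p -> (code_of_cycle (i, k) < N)%N -> e p i k = diagonal_limit i k.
Proof.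
move=> HP Hlt; have /= [_ H] := @refine_antitone (code_of_cycle (i, k)).+1 N p Hlt HP.
by rewrite code_of_cycleK in H.
Qed.

Theorem finite_valued_cluster_point : exists s, cluster_point e s.
Proof.
exists diagonal_limit => F m.
pose N := foldr maxn 0%N (map (fun q => (code_of_cycle q).+1) F).
have codes_below q : In q F -> (code_of_cycle q < N)%N.
  rewrite /N; elim: F {N} => [|a F IH] //= [->|Hq].
    by rewrite leq_max leqnn.
  by rewrite leq_max (IH Hq) orbT.
have [p [Hp HP]] := refine_infinite N m.
exists p; split => // -[i k] Hq; exact: refine_agrees HP (codes_below _ Hq).
Qed.
End ClusterPoint.

(* This holds because each update equation
   involves only four cycles. *)
Lemma cluster_point_evolution (A : SSCA) (cfg : nat -> Z -> state A)
    (c : Z -> state A) (e : nat -> Z -> nat -> state A) (s : Z -> nat -> state A) :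
  (forall p, is_evolution (cfg p) (e p)) ->
  (forall i, exists m, forall p, (m <= p)%N -> cfg p i = c i) ->
  cluster_point e s -> is_evolution c s.
Proof.
move=> evol conv clus; split.
- move=> i; have [m Hm] := conv i.
  have [p [Hmp Hp]] := clus ((i, 0%N) :: nil) m.
  have [init _] := evol p.
  by rewrite -(Hp (i, 0%N)) ?init ?Hm //=; left.
- move=> i k Hk.
  have [p [_ Hp]] := clus ((i, k) :: ((i - 1)%Z, (k - 1) %/ 2) :: (i, k - 1)
                            :: ((i + 1)%Z, 2 * k - 1) :: nil) 0.
  have [_ step] := evol p.
  have := step i k Hk; rewrite /=.
  rewrite (Hp (i, k)) ?(Hp ((i - 1)%Z, (k - 1) %/ 2)) ?(Hp (i, k - 1))
          ?(Hp ((i + 1)%Z, 2 * k - 1)) //=; tauto.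
Qed.

Lemma single_one_config_vanishes (S : Type) (zero one : S) (i : Z) :
  exists m, forall p, (m <= p)%N ->
    single_one_config zero one (Z.of_nat p.+1) i = all_zero_config zero i.
Proof.
exists (Z.to_nat (Z.abs i)) => p /leP Hp.
rewrite /single_one_config /all_zero_config.
case: (Z.eqb_spec i (Z.of_nat p.+1)) => // Hi; lia.
Qed.

Theorem mainTheorem4 (A : SSCA) (zero one : state A) (Hzo : zero <> one) (k0 : nat) :
  ~ ( deterministic_with_value (all_zero_config zero) 0%Z k0 zero /\
      (forall p : Z, (0 < p)%Z ->
         deterministic_with_value (single_one_config zero one p) 0%Z k0 one) ).
Proof.
move=> [[_ zero_det] one_det].
pose cfg p := single_one_config zero one (Z.of_nat p.+1).
pose good p s := is_evolution (cfg p) s /\ s 0%Z k0 = one.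
pose e p := epsilon (inhabits (fun (_ : Z) (_ : nat) => zero)) (good p).
have e_good p : good p (e p).
  apply: epsilon_spec; have [[s Hs] _] := one_det (Z.of_nat p.+1) ltac:(lia).
  by exists s.
have [s clus] := finite_valued_cluster_point e.
have s_evol : is_evolution (all_zero_config zero) s.
  apply: (cluster_point_evolution (cfg := cfg)) clus.
  - by move=> p; case: (e_good p).
  - exact: single_one_config_vanishes.
have [p [_ Hp]] := clus ((0%Z, k0) :: nil) 0.
apply: Hzo; rewrite -(zero_det s s_evol) -(Hp (0%Z, k0)) /=; last by left.
by case: (e_good p).
Qed.
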